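(* For any positive integers $q$ and $\ell$ with $\ell>q$ and $\ell$ a multiple of $q$, there exists an instance of \textsc{Min-Lin-Eq$(q)$} on the complete bipartite graph $K_{\ell,\ell}$ (i.e. integers $c_{uv}\in\{0,\dots,q-1\}$ for each edge $uv$, oriented from one side to the other, with constraint $x_u-x_v\equiv c_{uv}\pmod q$) such that for every vertex labeling $x$ of $K_{\ell,\ell}$ with labels in $\{0,\dots,q-1\}$, the number of satisfied constraints is at least $\ell^2/q-\Theta(\ell^{3/2})$ and at most $\ell^2/q+\Theta(\ell^{3/2})$; that is, it lies within $C\ell^{3/2}$ of $\ell^2/q$ for a constant $C$ depending only on $q$.
   Context: \textsc{Min-Lin-Eq$(q)$} on a graph $H$: each edge $uv$ (with a fixed orientation $(u,v)$) carries an integer $c_{uv}\in\{0,\dots,q-1\}$ and the constraint $x_u-x_v\equiv c_{uv}\pmod q$ on assignments $x:V(H)\to\{0,\dots,q-1\}$. *)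

From mathcomp Require Import all_boot.
From Stdlib Require Import Reals.

Set Implicit Arguments.
Unset Strict Implicit.
Unset Printing Implicit Defensive.

(* An instance of Min-Lin-Eq(q) on K_{l,l}: left vertices 'I_l, right vertices
   'I_l, every edge (u,v) oriented from the left vertex u to the right vertex v,
   carrying a label c u v in {0,...,q-1}.  A labeling assigns x u to left vertices
   and y v to right vertices, with labels in {0,...,q-1}.  The constraint on edge
   (u,v) is  x_u - x_v = c_uv (mod q), i.e.  x u = y v + c u v (mod q). *)
Definition lin_eq_sat (q l : nat) (c : 'I_l -> 'I_l -> 'I_q)
  (x y : 'I_l -> 'I_q) (u v : 'I_l) : bool :=
  (nat_of_ord (x u) == nat_of_ord (y v) + nat_of_ord (c u v) %[mod q]).

Definition num_sat (q l : nat) (c : 'I_l -> 'I_l -> 'I_q)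
  (x y : 'I_l -> 'I_q) : nat :=
  #|[set e : 'I_l * 'I_l | lin_eq_sat c x y e.1 e.2]|.

From mathcomp Require Import all_boot.
From Stdlib Require Import Reals.
From mathcomp Require all_order all_algebra all_solvable all_field.
From mathcomp Require ring zify.
From mathcomp Require Import Rstruct.

(** Embed both sides of K_{l,l} injectively into a finite field F with
    q | |F| - 1 and |F| = O(l), and label the edge uv by the discrete logarithm
    of u + v modulo q.  Fix a labeling (x, y) and put
    alpha_v(z) = y_v + dlog(z + v) mod q, so that uv is satisfied iff
    x_u = alpha_v(u).  Then q #sat - l^2 = sum_u D(u, x_u) with
    D(z, a) = sum_v (q [a = alpha_v(z)] - 1); Cauchy-Schwarz bounds its square
    by l sum_z sum_a D(z, a)^2, and expanding the square leaves only the
    collision counts #{z | alpha_v(z) = alpha_v'(z)}.  For v <> v' the map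
    z |-> (z + v) / (z + v') is injective and sends these collisions into a
    single residue class of dlog, so there are at most |F|/q + 3 of them.
    Altogether (q #sat - l^2)^2 = O(q^2 l^3). *)

(* The algebra library is imported only inside this module because it rebinds
   the delimiter %R, which the statement of [lemma7] uses for Stdlib's reals. *)
Module DlogConstruction.
Import all_order all_algebra all_solvable all_field ring zify.
Import Order.TTheory GRing.Theory Num.Theory.

Set Implicit Arguments.
Unset Strict Implicit.
Unset Printing Implicit Defensive.

Local Open Scope ring_scope.

Lemma mobius_inj (K : fieldType) (a b : K) : a != b ->
  {in [pred z | z + b != 0] &, injective (fun z => (z + a) / (z + b))}.
Proof.
move=> neq_ab z1 z2 nz1 nz2 /eqP; rewrite eqr_div // => /eqP E.
have : (z1 - z2) * (b - a) = (z1 + a) * (z2 + b) - (z2 + a) * (z1 + b) by ring.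
rewrite E subrr => /eqP; rewrite mulf_eq0 !subr_eq0 [b == a]eq_sym (negbTE neq_ab) orbF.
by move/eqP.
Qed.

Section FinFieldDlog.
Variable F : finFieldType.
Local Notation n := #|F|.-1.

Lemma finField_card_pred_gt0 : (0 < n)%nat.
Proof. by rewrite -subn1 subn_gt0 finNzRing_gt1. Qed.

Lemma finField_expf_card_pred (z : F) : z != 0 -> z ^+ n = 1.
Proof.
move=> nz; apply: (mulIf nz); rewrite mul1r -exprSr prednK ?expf_card //.
exact: ltnW (finNzRing_gt1 F).
Qed.

Lemma finField_prim_root_exists : exists w : F, n.-primitive_root w.
Proof.
have roots : all n.-unity_root (enum (predC1 (0 : F)%R)).
  apply/allP => z; rewrite mem_enum => nz.
  by rewrite unity_rootE finField_expf_card_pred.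
have size_roots : (n <= size (enum (predC1 (0 : F)%R)))%nat by rewrite -cardE cardC1.
have := has_prim_root finField_card_pred_gt0 roots (enum_uniq _) size_roots.
by case/hasP => w _ w_prim; exists w.
Qed.

Variable w : F.
Hypothesis w_prim : n.-primitive_root w.

(* Junk value 0 at z = 0. *)
Definition dlog (z : F) : nat :=
  if [pick i : 'I_n | w ^+ i == z] is Some i then val i else 0.

Lemma dlog_lt z : (dlog z < n)%nat.
Proof.
by rewrite /dlog; case: pickP => [i _|_]; [exact: ltn_ord | exact: finField_card_pred_gt0].
Qed.

Lemma expr_dlog (z : F) : z != 0 -> w ^+ dlog z = z.
Proof.
move=> nz; rewrite /dlog; case: pickP => [i /eqP //|no_i].
have [i def_z] := prim_rootP w_prim (finField_expf_card_pred nz).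
by have := no_i i; rewrite -def_z eqxx.
Qed.

Lemma dlogM (a b : F) : a != 0 -> b != 0 -> dlog (a * b) = dlog a + dlog b %[mod n].
Proof.
move=> nza nzb; apply/eqP; rewrite -(eq_prim_root_expr w_prim).
by rewrite exprD !expr_dlog ?mulf_neq0.
Qed.

Variable q : nat.
Hypothesis q_dvd_n : (q %| n)%nat.

Lemma card_dlog_residue (k m : nat) :
  (#|[set u : F | (u != 0)%R && (k + dlog u == m %[mod q])]| <= (n %/ q).+1)%nat.
Proof.
pose A := [set u : F | (u != 0) && (k + dlog u == m %[mod q])].
pose quot (u : F) : 'I_(n %/ q).+1 := inord (dlog u %/ q).
have quot_lt u : (dlog u %/ q < (n %/ q).+1)%nat.
  by rewrite ltnS leq_div2r // ltnW // dlog_lt.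
have quot_inj : {in A &, injective quot}.
  move=> u1 u2; rewrite !inE => /andP[nz1 e1] /andP[nz2 e2].
  move/(congr1 val); rewrite /= !inordK // => eq_div.
  have eq_mod : dlog u1 = dlog u2 %[mod q].
    by apply/eqP; rewrite -(eqn_modDl k) (eqP e1) (eqP e2).
  by rewrite -(expr_dlog nz1) -(expr_dlog nz2) (divn_eq (dlog u1) q) eq_div eq_mod -divn_eq.
by rewrite -(card_in_imset quot_inj) -[X in (_ <= X)%nat]card_ord max_card.
Qed.

Lemma card_dlog_shift_eq (a b : F) (k m : nat) : a != b ->
  (#|[set z : F | k + dlog (z + a)%R == m + dlog (z + b)%R %[mod q]]| <= n %/ q + 3)%nat.
Proof.
move=> neq_ab; set Z := [set z | _].
pose Z' := [set z in Z | (z + a != 0) && (z + b != 0)].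
have card_Z : (#|Z| <= 2 + #|Z'|)%nat.
  have sub_Z : Z \subset [set - a; - b] :|: Z'.
    apply/subsetP => z zZ; rewrite in_setU in_set2 [z \in Z']inE zZ -!addr_eq0.
    by case: (z + a == 0); case: (z + b == 0).
  apply: leq_trans (subset_leq_card sub_Z) _; rewrite cardsU.
  apply: leq_trans (leq_subr _ _) _; rewrite leq_add2r cards2.
  by case: (_ != _).
pose phi z := (z + a) / (z + b).
have phi_inj : {in Z' &, injective phi}.
  move=> z1 z2; rewrite !inE => /and3P[_ _ nz1] /and3P[_ _ nz2].
  exact: mobius_inj.
have phi_Z' : phi @: Z' \subset [set u | (u != 0) && (k + dlog u == m %[mod q])].
  apply/subsetP => u /imsetP[z]; rewrite !inE => /and3P[zZ nza nzb] ->.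
  have nz_phi : phi z != 0 by rewrite mulf_neq0 ?invr_eq0.
  rewrite nz_phi -(eqn_modDr (dlog (z + b))) -addnA -modnDmr.
  have -> : ((dlog (phi z) + dlog (z + b)%R) %% q = dlog (z + a)%R %% q)%nat.
    by rewrite -(modn_dvdm _ q_dvd_n) -dlogM // divfK // modn_dvdm.
  by rewrite modnDmr.
have := leq_trans (subset_leq_card phi_Z') (card_dlog_residue k m).
rewrite (card_in_imset phi_inj); lia.
Qed.

End FinFieldDlog.

Lemma sqr_sumr_le (R : realDomainType) (l : nat) (f : 'I_l -> R) :
  (\sum_i f i) ^+ 2 <= l%:R * \sum_i f i ^+ 2.
Proof.
set S := \sum_i f i; set Q := \sum_i f i ^+ 2.
have sum_sqr_sub i : \sum_j (f i - f j) ^+ 2 = l%:R * f i ^+ 2 - 2 * f i * S + Q.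
  rewrite (eq_bigr (fun j => f i ^+ 2 - 2 * f i * f j + f j ^+ 2)); last by move=> j _; ring.
  by rewrite big_split sumrB /= sumr_const card_ord -mulr_sumr /S /Q; ring.
have : 0 <= \sum_i \sum_j (f i - f j) ^+ 2.
  by apply: sumr_ge0 => i _; apply: sumr_ge0 => j _; exact: sqr_ge0.
have -> : \sum_i \sum_j (f i - f j) ^+ 2 = 2 * (l%:R * Q - S ^+ 2).
  rewrite (eq_bigr _ (fun i _ => sum_sqr_sub i)) big_split sumrB /= sumr_const card_ord.
  by rewrite -mulr_sumr -mulr_suml -mulr_sumr -/S -/Q mulr_natl; ring.
by rewrite pmulr_rge0 // subr_ge0.
Qed.

Lemma sumr_delta (R : pzRingType) (T : finType) (b : T) (f : T -> R) :
  \sum_a (a == b)%:R * f a = f b.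
Proof.
rewrite (bigD1 b) //= eqxx mul1r big1 ?addr0 // => a /negbTE ->.
by rewrite mul0r.
Qed.

Lemma sumr_comp_inj_le (R : numDomainType) (I J : finType) (h : I -> J) (F : J -> R) :
  injective h -> (forall j, 0 <= F j) -> \sum_i F (h i) <= \sum_j F j.
Proof.
move=> h_inj F_ge0; rewrite -(big_imset _ (in2W h_inj)) /=.
set S := [set h x | x in _].
by rewrite [X in _ <= X](bigID [in S]) /= lerDl; apply: sumr_ge0.
Qed.

Section SecondMoment.
Variables (R : realDomainType) (q : nat).

(* For q > 0 this is the sum of the nontrivial additive characters of Z/q at a - b. *)
Definition centered_eq (a b : 'I_q) : R := (q * (a == b))%:R - 1.

Lemma sum_centered_eq_mul (al be : 'I_q) :
  \sum_a centered_eq a al * centered_eq a be = q%:R * centered_eq al be.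
Proof.
rewrite /centered_eq (eq_bigr (fun a => q%:R * q%:R * ((a == al)%:R * (a == be)%:R)
  - q%:R * ((a == al)%:R * 1) - q%:R * ((a == be)%:R * 1) + 1)); last first.
  by move=> a _; rewrite !natrM; ring.
rewrite !big_split /= !sumrN -!mulr_sumr !sumr_delta sumr_const card_ord.
by rewrite natrM; ring.
Qed.

Variables (T : finType) (l K : nat) (iota : 'I_l -> T) (alpha : 'I_l -> T -> 'I_q).
Hypothesis iota_inj : injective iota.
Hypothesis alpha_collision : forall v v', v != v' ->
  (q * #|[set z | alpha v z == alpha v' z]| <= #|T| + K)%nat.

Definition discrepancy (z : T) (a : 'I_q) : R := \sum_v centered_eq a (alpha v z).

Lemma hits_eq_sum_discrepancy (x : 'I_l -> 'I_q) :
  (q * \sum_u \sum_v (x u == alpha v (iota u)))%:R - (l * l)%:R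
    = \sum_u discrepancy (iota u) (x u).
Proof.
rewrite /discrepancy /centered_eq.
under [RHS]eq_bigr => u _ do rewrite sumrB sumr_const card_ord -natr_sum -big_distrr /=.
by rewrite sumrB sumr_const card_ord -natr_sum -big_distrr [(l * l)%:R]natrM mulr_natr.
Qed.

Lemma sum_sqr_discrepancy :
  \sum_z \sum_a discrepancy z a ^+ 2
    = q%:R * \sum_v \sum_v' \sum_z centered_eq (alpha v z) (alpha v' z).
Proof.
rewrite /discrepancy.
under eq_bigr => z _ do under eq_bigr => a _ do rewrite expr2 big_distrlr /=.
under eq_bigr => z _ do rewrite exchange_big /=.
under eq_bigr => z _ do under eq_bigr => v _ do rewrite exchange_big /=.
rewrite exchange_big mulr_sumr; apply: eq_bigr => v _.
rewrite exchange_big mulr_sumr; apply: eq_bigr => v' _.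
by rewrite mulr_sumr; apply: eq_bigr => z _; exact: sum_centered_eq_mul.
Qed.

Lemma sum_centered_collision_le v v' :
  \sum_z centered_eq (alpha v z) (alpha v' z) <= (v == v')%:R * (q * #|T|)%:R + K%:R.
Proof.
have -> : \sum_z centered_eq (alpha v z) (alpha v' z)
    = (q * #|[set z | alpha v z == alpha v' z]|)%:R - #|T|%:R.
  by rewrite /centered_eq sumrB sumr_const -natr_sum -big_distrr -sum1dep_card [in RHS]big_mkcond.
case: (v =P v') => [<-|/eqP neq_vv'].
  rewrite mul1r lerBlDr -!natrD ler_nat -addnA.
  by apply: leq_trans (leq_addr _ _); rewrite leq_mul2l max_card orbT.
by rewrite mul0r add0r lerBlDr -natrD ler_nat addnC alpha_collision.
Qed.

Lemma second_moment_bound (x : 'I_l -> 'I_q) :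
  ((q * \sum_u \sum_v (x u == alpha v (iota u)))%:R - (l * l)%:R : R) ^+ 2
    <= (l * q * (l * q * #|T| + l * l * K))%:R.
Proof.
rewrite hits_eq_sum_discrepancy; apply: le_trans (sqr_sumr_le _) _.
rewrite -mulnA natrM ler_wpM2l //.
have hits_le : \sum_u discrepancy (iota u) (x u) ^+ 2 <= \sum_z \sum_a discrepancy z a ^+ 2.
  apply: le_trans (_ : _ <= \sum_u \sum_a discrepancy (iota u) a ^+ 2) _.
    apply: ler_sum => u _; rewrite (bigD1 (x u)) //= lerDl.
    by apply: sumr_ge0 => a _; exact: sqr_ge0.
  apply: sumr_comp_inj_le iota_inj _ => z.
  by apply: sumr_ge0 => a _; exact: sqr_ge0.
apply: le_trans hits_le _; rewrite sum_sqr_discrepancy natrM ler_wpM2l //.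
apply: le_trans (_ : _ <= \sum_v \sum_v' ((v' == v)%:R * (q * #|T|)%:R + K%:R)) _.
  apply: ler_sum => v _; apply: ler_sum => v' _.
  by rewrite eq_sym; exact: sum_centered_collision_le.
under eq_bigr => v _ do rewrite big_split /= sumr_delta sumr_const card_ord.
rewrite sumr_const card_ord -mulrnA -natrD -mulrnA ler_nat.
by apply/eq_leq; ring.
Qed.

End SecondMoment.

Lemma abs_sub_div_le (R : rcfType) (Q L S B : R) : 0 < Q -> 0 <= L -> 0 <= B ->
  (Q * S - L ^+ 2) ^+ 2 <= Q ^+ 2 * B * L ^+ 3 ->
  `|S - L ^+ 2 / Q| <= Num.sqrt B * (L * Num.sqrt L).
Proof.
move=> Q_gt0 L_ge0 B_ge0 le_sqr.
have le_abs : `|Q * S - L ^+ 2| <= Q * (Num.sqrt B * (L * Num.sqrt L)).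
  have -> : Q * (Num.sqrt B * (L * Num.sqrt L)) = Num.sqrt ((Q * L) ^+ 2 * (B * L)).
    rewrite sqrtrM ?sqr_ge0 // sqrtr_sqr sqrtrM // ger0_norm; first by ring.
    by rewrite mulr_ge0 // ltW.
  rewrite -sqrtr_sqr ler_wsqrtr //.
  by have -> : (Q * L) ^+ 2 * (B * L) = Q ^+ 2 * B * L ^+ 3 by ring.
have -> : S - L ^+ 2 / Q = (Q * S - L ^+ 2) / Q by field; rewrite gt_eqF.
by rewrite normrM normfV (gtr0_norm Q_gt0) ler_pdivrMr // [_ * Q]mulrC.
Qed.

Lemma finField_card_1_mod_between (q : nat) : (0 < q)%nat ->
  exists2 b : nat, (0 < b)%nat & forall l, (0 < l)%nat ->
    exists F : finFieldType, [/\ (q %| #|F|.-1)%nat, (l <= #|F|)%nat & (#|F| <= b * l)%nat].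
Proof.
move=> q_gt0; have [p q_lt_p p_pr] := prime_above q.
pose b := expn p (totient q).
have b_gt1 : (1 < b)%nat by rewrite /b -{1}(expn0 p) ltn_exp2l ?prime_gt1 ?totient_gt0.
have b_mod_q : b = 1 %[mod q].
  apply: Euler_exp_totient; rewrite prime_coprime //.
  by apply/negP => /(dvdn_leq q_gt0); rewrite leqNgt q_lt_p.
exists b; first exact: ltnW.
move=> l l_gt0; pose k := (trunc_log b l).+1.
have tk_gt0 : (0 < totient q * k)%nat by rewrite muln_gt0 totient_gt0 q_gt0.
have [F _ card_F] := pPrimePowerField p_pr tk_gt0.
exists F; rewrite card_F expnM -/b; split.
- rewrite -subn1 -eqn_mod_dvd; last by rewrite expn_gt0 ltnW.
  by rewrite -modnXm b_mod_q modnXm exp1n.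
- exact: ltnW (@trunc_log_ltn b l b_gt1).
- by rewrite /k expnS leq_mul2l (trunc_logP b_gt1 l_gt0) orbT.
Qed.

Lemma num_sat_sum (q l : nat) (c : 'I_l -> 'I_l -> 'I_q) (x y : 'I_l -> 'I_q) :
  num_sat c x y = (\sum_u \sum_v lin_eq_sat c x y u v)%nat.
Proof.
rewrite /num_sat -sum1dep_card pair_big /= big_mkcond /=.
by apply: eq_bigr => -[u v].
Qed.

Section DlogInstance.
Variables (F : finFieldType) (w : F) (q l : nat) (iota : 'I_l -> F).
Hypotheses (w_prim : (#|F|.-1).-primitive_root w) (q_gt0 : (0 < q)%nat).
Hypotheses (q_dvd : (q %| #|F|.-1)%nat) (iota_inj : injective iota).

Definition dlog_instance (u v : 'I_l) : 'I_q :=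
  Ordinal (ltn_pmod (dlog w (iota u + iota v)) q_gt0).

Lemma dlog_instance_discrepancy (R : realDomainType) (x y : 'I_l -> 'I_q) :
  ((q * num_sat dlog_instance x y)%:R - (l * l)%:R : R) ^+ 2
    <= (l * q * (l * q * #|F| + l * l * (3 * q)))%:R.
Proof.
pose alpha v z : 'I_q := Ordinal (ltn_pmod (y v + dlog w (z + iota v)) q_gt0).
have -> : num_sat dlog_instance x y = (\sum_u \sum_v (x u == alpha v (iota u)))%nat.
  rewrite num_sat_sum; apply: eq_bigr => u _; apply: eq_bigr => v _.
  by rewrite /lin_eq_sat /= modnDmr (modn_small (ltn_ord (x u))).
apply: second_moment_bound => // v v' neq_vv'.
have neq_iota : iota v != iota v' by rewrite (inj_eq iota_inj).
have -> : [set z | alpha v z == alpha v' z]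
    = [set z | y v + dlog w (z + iota v) == y v' + dlog w (z + iota v') %[mod q]].
  by apply/setP => z; rewrite !inE.
apply: leq_trans (leq_mul (leqnn q) (card_dlog_shift_eq w_prim q_dvd _ _ neq_iota)) _.
by rewrite mulnDr mulnC divnK // [(q * 3)%nat]mulnC leq_add2r leq_pred.
Qed.

End DlogInstance.

Lemma dlog_instance_bound (R : rcfType) (q : nat) : (0 < q)%nat ->
  exists2 C : R, 0 < C & forall l, (0 < l)%nat ->
    exists c : 'I_l -> 'I_l -> 'I_q, forall x y,
      `|(num_sat c x y)%:R - (l * l)%:R / q%:R| <= C * (l%:R * Num.sqrt l%:R).
Proof.
move=> q_gt0; have [b b_gt0 field_at] := finField_card_1_mod_between q_gt0.
exists (Num.sqrt (b + 3)%:R); first by rewrite sqrtr_gt0 ltr0n addn_gt0 orbT.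
move=> l l_gt0; have [F [q_dvd l_le_F F_le_bl]] := field_at l l_gt0.
have [w w_prim] := finField_prim_root_exists F.
pose iota (i : 'I_l) : F := enum_val (widen_ord l_le_F i).
have iota_inj : injective iota.
  by move=> i j /enum_val_inj eq_ij; apply/val_inj; exact: (congr1 val eq_ij).
exists (dlog_instance w iota q_gt0) => x y.
rewrite natrM -expr2; apply: abs_sub_div_le; rewrite ?ltr0n ?ler0n //.
rewrite -natrM -!natrX -!natrM -[expn l 2]mulnn.
apply: le_trans (dlog_instance_discrepancy w_prim q_gt0 q_dvd iota_inj _ x y) _.
rewrite ler_nat; apply: (@leq_trans (l * q * (l * q * (b * l) + l * l * (3 * q)))).
  by rewrite leq_mul2l leq_add2r !leq_mul2l F_le_bl !orbT.
by apply/eq_leq; ring.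
Qed.

End DlogConstruction.

Theorem lemma7 : forall q : nat, (0 < q)%N ->
  exists C : R, (0 < C)%R /\
  forall l : nat, (q < l)%N -> (q %| l)%N ->
  exists c : 'I_l -> 'I_l -> 'I_q,
  forall x y : 'I_l -> 'I_q,
    (Rabs (INR (num_sat c x y) - INR (l * l) / INR q)
       <= C * (INR l * sqrt (INR l)))%R.
Proof.
move=> q q_gt0.
have [C C_gt0 bound] : exists2 C : R, _ & _ := DlogConstruction.dlog_instance_bound _ q_gt0.
exists C; split; first exact/RltP.
move=> l q_lt_l _.
have [c c_bound] := bound l (leq_ltn_trans (leq0n q) q_lt_l).
exists c => x y; apply/RleP.
by rewrite !RealsE.
Qed.
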